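(* Let $I\subset(0,\infty)$ be the set of Mina margins of all positive ABMN solutions. Then: (1) there is $\lambda\in(0,1]$ with $I=[\lambda,\lambda^{-1}]$; (2) for $(m_{-\infty},m_\infty,n_{-\infty},n_\infty)\in\mathbb{R}^4$, a positive ABMN solution with this boundary data exists if and only if $m_{-\infty}<m_\infty$, $n_\infty<n_{-\infty}$ and $\frac{n_{-\infty}-n_\infty}{m_\infty-m_{-\infty}}\in[\lambda,\lambda^{-1}]$; (3) $\lambda\le 0.999904$.
   Context: The ABMN system on $\mathbb{Z}$ is the following set of equations in real variables $a_i,b_i,m_i,n_i$ ($i\in\mathbb{Z}$), with $a_i,b_i\ge 0$ always assumed: for every $i\in\mathbb{Z}$, $(a_i+b_i)(m_i+a_i)=a_im_{i+1}+b_im_{i-1}$; $(a_i+b_i)(n_i+b_i)=a_in_{i+1}+b_in_{i-1}$; $(a_i+b_i)^2=b_i(m_{i+1}-m_{i-1})$; $(a_i+b_i)^2=a_i(n_{i-1}-n_{i+1})$. A solution is positive if $a_i>0$ and $b_i>0$ for all $i$. Its boundary data is $(m_{-\infty},m_\infty,n_{-\infty},n_\infty)$, the limits $\lim_{k\to\infty}m_{-k}$, $\lim_{k\to\infty}m_k$, $\lim_{k\to\infty}n_{-k}$, $\lim_{k\to\infty}n_k$; for positive solutions these exist and are real, with $m_{-\infty}<m_\infty$, $n_\infty<n_{-\infty}$. Its Mina margin is $\frac{n_{-\infty}-n_\infty}{m_\infty-m_{-\infty}}$. *)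

From Stdlib Require Import Reals ZArith.
From Coquelicot Require Import Coquelicot.
Open Scope R_scope.

Definition ABMN_solution (a b m n : Z -> R) : Prop :=
  forall i : Z,
    0 <= a i /\ 0 <= b i /\
    (a i + b i) * (m i + a i) = a i * m (i + 1)%Z + b i * m (i - 1)%Z /\
    (a i + b i) * (n i + b i) = a i * n (i + 1)%Z + b i * n (i - 1)%Z /\
    (a i + b i) ^ 2 = b i * (m (i + 1)%Z - m (i - 1)%Z) /\
    (a i + b i) ^ 2 = a i * (n (i - 1)%Z - n (i + 1)%Z).

Definition positive_ABMN_solution (a b m n : Z -> R) : Prop :=
  ABMN_solution a b m n /\ forall i : Z, 0 < a i /\ 0 < b i.

Definition lim_plus (u : Z -> R) (l : R) : Prop :=
  is_lim_seq (fun k : nat => u (Z.of_nat k)) (Finite l).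
Definition lim_minus (u : Z -> R) (l : R) : Prop :=
  is_lim_seq (fun k : nat => u (- Z.of_nat k)%Z) (Finite l).

Definition has_boundary_data (m n : Z -> R) (mL mR nL nR : R) : Prop :=
  lim_minus m mL /\ lim_plus m mR /\ lim_minus n nL /\ lim_plus n nR.

Definition mina_margin (mL mR nL nR : R) : R := (nL - nR) / (mR - mL).

Definition realizable (mL mR nL nR : R) : Prop :=
  exists a b m n : Z -> R,
    positive_ABMN_solution a b m n /\ has_boundary_data m n mL mR nL nR.

Definition mina_margins (x : R) : Prop :=
  exists mL mR nL nR : R, realizable mL mR nL nR /\ x = mina_margin mL mR nL nR.

From Stdlib Require Import Reals ZArith Lra Lia Psatz Classical.
From Coquelicot Require Import Coquelicot.
Open Scope R_scope.

(* For a, b > 0 the four equations at index i say exactly that m_{i+1} - m_i =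
   2a_i + b_i, n_{i-1} - n_i = a_i + 2b_i, and that consecutive pairs satisfy the
   step relation  a_i^2 = b_i (2a_{i-1} + b_{i-1}),  a_{i-1} (a_i + 2b_i) = b_{i-1}^2.
   The step relation is a homogeneous bijection on positive pairs (the successor
   map next), and stepping backwards is stepping forwards with a, b exchanged.
   Hence a positive solution is, up to scaling, shifting and additive constants,
   the two-sided orbit ("profile") through (t, 1) with t = a_0 / b_0; its Mina
   margin is margin_fn t, the ratio of the bilateral sums of the n- and m-
   increments, which converge because orbits decay like 3^(-|i|).  Conversely
   every profile extends to solutions with any boundary data of margin
   margin_fn t.  Every solution has an index with a_i / b_i in [1, rho], so the
   margins form the image of [1, rho] under the continuous margin_fn, an interval;
   the reflection symmetry (a, m, i) <-> (b, n, -i) makes it closed under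
   inversion, hence equal to [lambda, 1/lambda].  Finally an interval-arithmetic
   enclosure of a few orbit terms at t = 2.906 gives lambda <= 0.999904. *)

Ltac positivity :=
  repeat first [ assumption | apply Rmult_lt_0_compat | apply Rdiv_lt_0_compat
               | apply Rplus_lt_0_compat ];
  try lra.
Ltac nonzero := apply Rgt_not_eq; unfold Rgt; positivity.

(* The one-step relation between consecutive pairs (a_{i-1}, b_{i-1}) = (p, q)
   and (a_i, b_i) = (u, v) of a positive ABMN solution. *)
Definition step (p q u v : R) : Prop := u ^ 2 = v * (2 * p + q) /\ p * (u + 2 * v) = q ^ 2.

Lemma step_swap p q u v : step p q u v -> step v u q p.
Proof. intros [h1 h2]; split; [rewrite <- h2 | rewrite h1]; ring. Qed.

Lemma step_scale s p q u v : step p q u v -> step (s * p) (s * q) (s * u) (s * v).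
Proof.
  intros [h1 h2]; split.
  - replace ((s * u) ^ 2) with (s ^ 2 * u ^ 2) by ring. rewrite h1. ring.
  - replace ((s * q) ^ 2) with (s ^ 2 * q ^ 2) by ring. rewrite <- h2. ring.
Qed.

(* For positive (p, q) the ratio x = u / v of the successor is the positive root of
   x^2 = c (x + 2), where c = p (2p + q) / q^2. *)
Definition next_coef (p q : R) : R := p * (2 * p + q) / (q * q).
Definition next_ratio (p q : R) : R :=
  let c := next_coef p q in (c + sqrt (c * c + 8 * c)) / 2.

(* The successor map: the unique positive (u, v) with step p q u v. *)
Definition next (pq : R * R) : R * R :=
  let (p, q) := pq in
  let x := next_ratio p q in ((2 * p + q) / x, (2 * p + q) / (x * x)).

Lemma next_coef_pos p q : 0 < p -> 0 < q -> 0 < next_coef p q.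
Proof. intros; unfold next_coef; apply Rdiv_lt_0_compat; nra. Qed.

Lemma next_ratio_spec p q : 0 < p -> 0 < q ->
  let x := next_ratio p q in
  0 < x /\ x * x = next_coef p q * (x + 2) /\ next_coef p q < x.
Proof.
  intros hp hq x. pose proof (next_coef_pos p q hp hq) as hc.
  unfold x, next_ratio. set (c := next_coef p q) in *.
  assert (hs0 : 0 <= c * c + 8 * c) by nra.
  pose proof (sqrt_sqrt _ hs0). pose proof (sqrt_pos (c * c + 8 * c)).
  assert (c < sqrt (c * c + 8 * c)) by nra.
  split; [lra | split; nra].
Qed.

Lemma quadratic_root_unique c y z : 0 < c -> 0 < y -> 0 < z ->
  y * y = c * (y + 2) -> z * z = c * (z + 2) -> y = z.
Proof. intros. assert (c < y) by nra. assert (c < z) by nra. nra. Qed.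

Lemma next_pos p q : 0 < p -> 0 < q -> 0 < fst (next (p, q)) /\ 0 < snd (next (p, q)).
Proof.
  intros hp hq. destruct (next_ratio_spec p q hp hq) as [hx _]. simpl.
  split; apply Rdiv_lt_0_compat; nra.
Qed.

Lemma next_step p q : 0 < p -> 0 < q -> step p q (fst (next (p, q))) (snd (next (p, q))).
Proof.
  intros hp hq. destruct (next_ratio_spec p q hp hq) as [hx [hxx _]].
  simpl. set (x := next_ratio p q) in *. unfold next_coef in hxx.
  split.
  - field. lra.
  - assert (H : x * x * (q * q) = p * (2 * p + q) * (x + 2)) by (rewrite hxx; field; lra).
    apply Rmult_eq_reg_r with (x * x); [| nonzero].
    replace (p * ((2 * p + q) / x + 2 * ((2 * p + q) / (x * x))) * (x * x))
      with (p * (2 * p + q) * (x + 2)) by (field; lra).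
    rewrite <- H. ring.
Qed.

Lemma step_unique p q u v : 0 < p -> 0 < q -> 0 < u -> 0 < v -> step p q u v ->
  u = fst (next (p, q)) /\ v = snd (next (p, q)).
Proof.
  intros hp hq hu hv [h1 h2].
  destruct (next_ratio_spec p q hp hq) as [hx [hxx _]].
  simpl. set (x := next_ratio p q) in *.
  assert (hy : (u / v) * (u / v) = next_coef p q * (u / v + 2)).
  { unfold next_coef. apply Rmult_eq_reg_r with (v * v * (q * q)); [| nonzero].
    replace (u / v * (u / v) * (v * v * (q * q))) with (u ^ 2 * (q * q)) by (field; lra).
    replace (p * (2 * p + q) / (q * q) * (u / v + 2) * (v * v * (q * q)))
      with ((2 * p + q) * v * (p * (u + 2 * v))) by (field; lra).
    rewrite h1, h2. ring. }
  assert (e : u / v = x).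
  { apply (quadratic_root_unique (next_coef p q)); auto.
    - apply next_coef_pos; auto.
    - apply Rdiv_lt_0_compat; auto. }
  assert (eu : u = x * v) by (rewrite <- e; field; lra).
  subst u. assert (hxv : x * x * v = 2 * p + q) by nra.
  split; rewrite <- hxv; field; lra.
Qed.

Lemma next_scale s p q : 0 < s -> 0 < p -> 0 < q ->
  next (s * p, s * q) = (s * fst (next (p, q)), s * snd (next (p, q))).
Proof.
  intros hs hp hq. destruct (next_pos p q hp hq).
  destruct (step_unique (s * p) (s * q) (s * fst (next (p, q))) (s * snd (next (p, q))))
    as [e1 e2]; try nra.
  - apply step_scale, next_step; auto.
  - destruct (next (s * p, s * q)); simpl in *; subst; auto.
Qed.

Lemma step_ratio p q u v : 0 < p -> 0 < q -> 0 < u -> 0 < v -> step p q u v ->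
  u / v = next_ratio p q.
Proof.
  intros hp hq hu hv hs. destruct (step_unique p q u v hp hq hu hv hs) as [e1 e2].
  destruct (next_ratio_spec p q hp hq) as [hx _].
  rewrite e1, e2; simpl. field. lra.
Qed.

Fixpoint orbit (p q : R) (k : nat) : R * R :=
  match k with O => (p, q) | S k => next (orbit p q k) end.
Definition oa p q k := fst (orbit p q k).
Definition ob p q k := snd (orbit p q k).

Lemma oa_S p q k : oa p q (S k) = fst (next (oa p q k, ob p q k)).
Proof. unfold oa, ob; simpl; destruct (orbit p q k); reflexivity. Qed.
Lemma ob_S p q k : ob p q (S k) = snd (next (oa p q k, ob p q k)).
Proof. unfold oa, ob; simpl; destruct (orbit p q k); reflexivity. Qed.

Lemma orbit_pos p q k : 0 < p -> 0 < q -> 0 < oa p q k /\ 0 < ob p q k.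
Proof.
  intros hp hq; induction k as [|k [h1 h2]]; [simpl; auto |].
  rewrite oa_S, ob_S. apply next_pos; auto.
Qed.

Lemma orbit_step p q k : 0 < p -> 0 < q ->
  step (oa p q k) (ob p q k) (oa p q (S k)) (ob p q (S k)).
Proof.
  intros hp hq. destruct (orbit_pos p q k hp hq).
  rewrite oa_S, ob_S. apply next_step; auto.
Qed.

Lemma step_sum_bound p q u v c : 0 < p -> 0 < q -> step p q u v ->
  q <= c * p -> u + 2 * v <= c * q.
Proof.
  intros hp hq [_ h2] h. apply Rmult_le_reg_l with p; auto.
  rewrite h2. nra.
Qed.

Lemma step_balance p q u v : 0 < p -> 0 < q -> 0 < u -> 0 < v -> step p q u v ->
  (q <= 5 * p -> v <= 2 * u) /\ (q <= 2 * p -> v <= u).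
Proof.
  intros hp hq hu hv [h1 h2]. split; intro h.
  - destruct (Rle_or_lt v (2 * u)) as [| hc]; auto.
    assert (2 * p + q < v / 4) by nra.
    assert (q ^ 2 > 8 * p * (2 * p + q)) by nra. nra.
  - destruct (Rle_or_lt v u) as [| hc]; auto.
    assert (2 * p + q < v) by nra.
    assert (q ^ 2 > 2 * p * (2 * p + q)) by nra. nra.
Qed.

Section OrbitDecay.
Variables p q : R.
Hypothesis hp : 0 < p.
Hypothesis hq : 0 < q.

Local Notation a := (oa p q).
Local Notation b := (ob p q).

(* One step of a balanced pair (b <= a): it stays balanced, and its mass a + 2b
   is at most the previous b, hence at most a third of the previous mass. *)
Lemma balanced_step k : b k <= a k ->
  b (S k) <= a (S k) /\ a (S k) + 2 * b (S k) <= b k.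
Proof.
  intro hk. destruct (orbit_pos p q k hp hq) as [ha hb].
  destruct (orbit_pos p q (S k) hp hq) as [ha' hb'].
  pose proof (orbit_step p q k hp hq) as st.
  split.
  - apply (proj2 (step_balance _ _ _ _ ha hb ha' hb' st)). lra.
  - rewrite <- (Rmult_1_l (ob p q k)). apply (step_sum_bound _ _ _ _ 1 ha hb st); lra.
Qed.

Lemma balanced_decay K : b K <= a K -> forall j,
  b (K + j)%nat <= a (K + j)%nat /\
  a (K + 1 + j)%nat + 2 * b (K + 1 + j)%nat <= b K * (/ 3) ^ j.
Proof.
  intros hK. induction j as [|j [IH1 IH2]].
  - replace (K + 1 + 0)%nat with (S K) by lia. replace (K + 0)%nat with K by lia.
    simpl pow. rewrite Rmult_1_r. split; [auto | apply (balanced_step K hK)].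
  - replace (K + S j)%nat with (S (K + j)) by lia.
    replace (K + 1 + S j)%nat with (S (S (K + j))) by lia.
    replace (K + 1 + j)%nat with (S (K + j)) in IH2 by lia.
    destruct (balanced_step _ IH1) as [B1 _].
    destruct (balanced_step _ B1) as [_ B2].
    split; [auto |]. simpl pow. lra.
Qed.

Lemma orbit_decay : q <= 5 * p -> forall k,
  a k + 2 * b k <= (p + 45 * q) * (/ 3) ^ k.
Proof.
  intros h k.
  destruct (orbit_pos p q 1 hp hq) as [a1 b1].
  destruct (orbit_pos p q 2 hp hq) as [a2 b2].
  pose proof (orbit_step p q 0 hp hq) as s0.
  pose proof (orbit_step p q 1 hp hq) as s1.
  assert (m1 : a 1%nat + 2 * b 1%nat <= 5 * q) by (apply (step_sum_bound p q); auto; lra).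
  assert (r1 : b 1%nat <= 2 * a 1%nat)
    by (apply (proj1 (step_balance p q _ _ hp hq a1 b1 s0)); auto).
  assert (r2 : b 2%nat <= a 2%nat)
    by (apply (proj2 (step_balance _ _ _ _ a1 b1 a2 b2 s1)); lra).
  assert (m2 : a 2%nat + 2 * b 2%nat <= 2 * b 1%nat)
    by (apply (step_sum_bound (a 1%nat)); auto; lra).
  destruct k as [|[|k]]; simpl pow.
  - unfold a, b; simpl; lra.
  - lra.
  - assert (hk : 0 < (/ 3) ^ k) by (apply pow_lt; lra).
    destruct k as [|k].
    + simpl pow; lra.
    + destruct (balanced_decay 2 r2 k) as [_ D].
      replace (2 + 1 + k)%nat with (S (S (S k))) in D by lia.
      simpl pow in *. nra.
Qed.

End OrbitDecay.

Lemma orbit_unique (x y : nat -> R) c p q : 0 < c -> 0 < p -> 0 < q ->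
  (forall k, 0 < x k /\ 0 < y k) -> x 0%nat = c * p -> y 0%nat = c * q ->
  (forall k, step (x k) (y k) (x (S k)) (y (S k))) ->
  forall k, x k = c * oa p q k /\ y k = c * ob p q k.
Proof.
  intros hc hp hq hpos h0 h0' hst. induction k as [|k [IH1 IH2]]; [auto |].
  destruct (hpos k) as [hx hy], (hpos (S k)) as [hx' hy'], (orbit_pos p q k hp hq).
  destruct (step_unique _ _ _ _ hx hy hx' hy' (hst k)) as [e1 e2].
  rewrite IH1, IH2, next_scale in e1, e2 by auto. simpl in e1, e2.
  rewrite oa_S, ob_S. auto.
Qed.

Lemma ex_series_geom_third : ex_series (fun k => (/ 3) ^ k).
Proof. exists (/ (1 - / 3)). apply is_series_geom. rewrite Rabs_pos_eq; lra. Qed.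

Lemma ex_series_geom_dominated (f : nat -> R) C :
  (forall k, Rabs (f k) <= C * (/ 3) ^ k) -> ex_series f.
Proof.
  intro h. apply ex_series_Rabs.
  apply (@ex_series_le R_AbsRing R_CompleteNormedModule _ (fun k => C * (/ 3) ^ k)).
  - intro k. change (norm (Rabs (f k))) with (Rabs (Rabs (f k))).
    rewrite Rabs_Rabsolu. apply h.
  - apply (ex_series_ext (fun k => scal C ((/ 3) ^ k))); [intro; reflexivity |].
    apply (@ex_series_scal_l R_AbsRing R_NormedModule), ex_series_geom_third.
Qed.

Lemma series_tail_bound (f : nat -> R) K B : ex_series f ->
  (forall k, Rabs (f (S K + k)%nat) <= B * (/ 3) ^ k) ->
  Rabs (Series f - sum_f_R0 f K) <= B * (3 / 2).
Proof.
  intros he hb.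
  rewrite (Series_incr_n f (S K)) by (auto; lia). simpl (Init.Nat.pred (S K)).
  replace (sum_f_R0 f K + Series (fun k => f (S K + k)%nat) - sum_f_R0 f K)
    with (Series (fun k => f (S K + k)%nat)) by ring.
  assert (hex : ex_series (fun k => Rabs (f (S K + k)%nat))).
  { apply (ex_series_geom_dominated _ B). intro k. rewrite Rabs_Rabsolu. apply hb. }
  eapply Rle_trans; [apply Series_Rabs, hex |].
  eapply Rle_trans.
  { apply (Series_le _ (fun k => B * (/ 3) ^ k)).
    - intro k. split; [apply Rabs_pos | apply hb].
    - apply (ex_series_ext (fun k => scal B ((/ 3) ^ k))); [intro; reflexivity |].
      apply (@ex_series_scal_l R_AbsRing R_NormedModule), ex_series_geom_third. }
  rewrite Series_scal_l, Series_geom by (rewrite Rabs_pos_eq; lra).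
  right. field.
Qed.

Lemma series_ge_partial (f : nat -> R) K : ex_series f -> (forall k, 0 <= f k) ->
  sum_f_R0 f K <= Series f.
Proof.
  intros he hp.
  rewrite (Series_incr_n f (S K)) by (auto; lia). simpl (Init.Nat.pred (S K)).
  assert (0 <= Series (fun k => f (S K + k)%nat)).
  { assert (z : Series (fun _ : nat => 0) = 0).
    { rewrite (Series_ext _ (fun _ : nat => 0 * 0)) by (intro; ring).
      rewrite Series_scal_l; ring. }
    rewrite <- z. apply Series_le; [intro; split; [lra | apply hp] |].
    apply (proj1 (ex_series_incr_n f (S K))); auto. }
  lra.
Qed.

Lemma is_series_partial_sums (f : nat -> R) l :
  is_series f l <-> is_lim_seq (sum_f_R0 f) (Finite l).
Proof.
  split; intro h.
  - apply (is_lim_seq_ext (sum_n f)); [intro n; apply sum_n_Reals | exact h].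
  - assert (H : is_lim_seq (sum_n f) (Finite l)).
    { apply (is_lim_seq_ext (sum_f_R0 f)); [intro n; symmetry; apply sum_n_Reals | exact h]. }
    exact H.
Qed.

Lemma lim_plus_shift u l i : lim_plus u l -> lim_plus (fun z => u (z + i)%Z) l.
Proof.
  unfold lim_plus. intro H.
  destruct (Z_le_gt_dec 0 i) as [h | h].
  - destruct (Z_of_nat_complete _ h) as [N ->].
    apply (is_lim_seq_ext (fun k => u (Z.of_nat (k + N)))); [intros; f_equal; lia |].
    apply (proj1 (is_lim_seq_incr_n (fun k => u (Z.of_nat k)) N l)); auto.
  - destruct (Z_of_nat_complete (- i) ltac:(lia)) as [N hN].
    apply (proj2 (is_lim_seq_incr_n _ N l)).
    apply (is_lim_seq_ext (fun k => u (Z.of_nat k))); auto.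
    intros; f_equal; lia.
Qed.

Lemma lim_minus_shift u l i : lim_minus u l -> lim_minus (fun z => u (z + i)%Z) l.
Proof.
  intro H. pose proof (lim_plus_shift (fun z => u (- z)%Z) l (- i)%Z H) as H'.
  unfold lim_plus, lim_minus in *.
  eapply is_lim_seq_ext; [| exact H']. intro k; cbv beta; f_equal; lia.
Qed.

(* Bilateral series: sum over z in Z, split into the forward part (z >= 0) and
   the backward part (z <= -1). *)
Definition zfwd (w : Z -> R) (k : nat) : R := w (Z.of_nat k).
Definition zbwd (w : Z -> R) (k : nat) : R := w (-1 - Z.of_nat k)%Z.
Definition ex_zseries (w : Z -> R) : Prop := ex_series (zfwd w) /\ ex_series (zbwd w).
Definition zseries (w : Z -> R) : R := Series (zfwd w) + Series (zbwd w).

Lemma zseries_scale s w : zseries (fun z => s * w z) = s * zseries w.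
Proof.
  unfold zseries, zfwd, zbwd. rewrite !(Series_scal_l s (fun k => w _)). ring.
Qed.

Lemma ex_zseries_scale s w : ex_zseries w -> ex_zseries (fun z => s * w z).
Proof.
  intros [h1 h2].
  split; [apply (ex_series_ext (fun k => scal s (zfwd w k)))
         | apply (ex_series_ext (fun k => scal s (zbwd w k)))];
    try (intro; reflexivity); apply (@ex_series_scal_l R_AbsRing R_NormedModule); auto.
Qed.

Lemma zseries_of_increments (u w : Z -> R) lL lR :
  (forall j, u (j + 1)%Z = u j + w j) -> lim_plus u lR -> lim_minus u lL ->
  ex_zseries w /\ zseries w = lR - lL.
Proof.
  intros hu hR hL.
  assert (f : is_series (zfwd w) (lR - u 0%Z)).
  { apply is_series_partial_sums.
    apply (is_lim_seq_ext (fun n => u (Z.of_nat (S n)) - u 0%Z)).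
    - intro n; symmetry; induction n as [|n IH]; unfold zfwd in *.
      + pose proof (hu 0%Z). simpl in *. lra.
      + rewrite tech5, IH. replace (Z.of_nat (S (S n))) with (Z.of_nat (S n) + 1)%Z by lia.
        rewrite hu. ring.
    - apply (is_lim_seq_incr_1 (fun n => u (Z.of_nat n) - u 0%Z)).
      apply is_lim_seq_minus'; [exact hR | apply is_lim_seq_const]. }
  assert (b : is_series (zbwd w) (u 0%Z - lL)).
  { apply is_series_partial_sums.
    apply (is_lim_seq_ext (fun n => u 0%Z - u (- Z.of_nat (S n))%Z)).
    - intro n; symmetry; induction n as [|n IH]; unfold zbwd in *.
      + pose proof (hu (-1)%Z). simpl in *. lra.
      + rewrite tech5, IH. pose proof (hu (-1 - Z.of_nat (S n))%Z) as h.
        replace (-1 - Z.of_nat (S n) + 1)%Z with (- Z.of_nat (S n))%Z in h by lia.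
        replace (- Z.of_nat (S (S n)))%Z with (-1 - Z.of_nat (S n))%Z by lia. lra.
    - apply (is_lim_seq_incr_1 (fun n => u 0%Z - u (- Z.of_nat n)%Z)).
      apply is_lim_seq_minus'; [apply is_lim_seq_const | exact hL]. }
  split; [split; eexists; eauto |].
  unfold zseries. rewrite (is_series_unique _ _ f), (is_series_unique _ _ b). ring.
Qed.

Section Construction.
Variable w : Z -> R.
Hypothesis hw : ex_zseries w.

Let tail (j : Z) : R := Series (fun k => w (j + Z.of_nat k)%Z).

Lemma ex_tail j : ex_series (fun k => w (j + Z.of_nat k)%Z).
Proof.
  destruct hw as [hf hb]. destruct (Z_le_gt_dec 0 j) as [h | h].
  - destruct (Z_of_nat_complete _ h) as [n ->].
    apply (ex_series_ext (fun k => zfwd w (n + k))); [intro; unfold zfwd; f_equal; lia |].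
    apply (proj1 (ex_series_incr_n (zfwd w) n)); auto.
  - destruct (Z_of_nat_complete (- j) ltac:(lia)) as [n hn].
    apply (proj2 (ex_series_incr_n _ n)).
    apply (ex_series_ext (zfwd w)); auto.
    intro; unfold zfwd; f_equal; lia.
Qed.

Lemma tail_step j : tail j = w j + tail (j + 1)%Z.
Proof.
  unfold tail. rewrite Series_incr_1 by apply ex_tail.
  f_equal; [f_equal; lia |]. apply Series_ext; intros; f_equal; lia.
Qed.

Lemma tail_0 : tail 0 = Series (zfwd w).
Proof. reflexivity. Qed.

Lemma tail_lim_plus : lim_plus tail 0.
Proof.
  apply (is_lim_seq_incr_1 (fun k => tail (Z.of_nat k))).
  apply (is_lim_seq_ext (fun n => tail 0 - sum_f_R0 (zfwd w) n)).
  { induction n as [|n IH].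
    - rewrite (tail_step 0). simpl. unfold zfwd. simpl. lra.
    - rewrite tech5, (tail_step (Z.of_nat (S n))) in *.
      replace (Z.of_nat (S (S n))) with (Z.of_nat (S n) + 1)%Z by lia.
      unfold zfwd in *. lra. }
  replace (Finite 0) with (Finite (tail 0 - Series (zfwd w))) by (rewrite tail_0; f_equal; ring).
  apply is_lim_seq_minus'; [apply is_lim_seq_const |].
  apply is_series_partial_sums, Series_correct, hw.
Qed.

Lemma tail_lim_minus : lim_minus tail (zseries w).
Proof.
  apply (is_lim_seq_incr_1 (fun k => tail (- Z.of_nat k)%Z)).
  apply (is_lim_seq_ext (fun n => tail 0 + sum_f_R0 (zbwd w) n)).
  { intro n; symmetry; induction n as [|n IH].
    - rewrite (tail_step (- Z.of_nat 1)%Z). simpl. unfold zbwd. simpl. lra.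
    - rewrite tech5, (tail_step (- Z.of_nat (S (S n)))%Z).
      replace (- Z.of_nat (S (S n)) + 1)%Z with (- Z.of_nat (S n))%Z by lia.
      rewrite IH. unfold zbwd.
      replace (-1 - Z.of_nat (S n))%Z with (- Z.of_nat (S (S n)))%Z by lia. lra. }
  unfold zseries. rewrite <- tail_0.
  apply is_lim_seq_plus'; [apply is_lim_seq_const |].
  apply is_series_partial_sums, Series_correct, hw.
Qed.

Lemma increments_of_zseries lR : exists u : Z -> R,
  (forall j, u (j + 1)%Z = u j + w j) /\ lim_plus u lR /\ lim_minus u (lR - zseries w).
Proof.
  exists (fun j => lR - tail j). split; [| split].
  - intro j. rewrite (tail_step j). ring.
  - unfold lim_plus. replace (Finite lR) with (Finite (lR - 0)) by (f_equal; ring).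
    apply is_lim_seq_minus'; [apply is_lim_seq_const | apply tail_lim_plus].
  - unfold lim_minus.
    apply is_lim_seq_minus'; [apply is_lim_seq_const | apply tail_lim_minus].
Qed.

End Construction.

Lemma zhalves_bound (w : Z -> R) C :
  (forall z, Rabs (w z) <= C * (/ 3) ^ Z.abs_nat z) ->
  forall k, Rabs (zfwd w k) <= C * (/ 3) ^ k /\ Rabs (zbwd w k) <= C * (/ 3) ^ k.
Proof.
  intros h k. unfold zfwd, zbwd. split.
  - rewrite <- (Zabs2Nat.id k) at 2. apply h.
  - eapply Rle_trans; [apply h |].
    replace (Z.abs_nat (-1 - Z.of_nat k)) with (S k) by lia.
    assert (0 <= C) by (pose proof (h 0%Z); pose proof (Rabs_pos (w 0%Z)); simpl in *; lra).
    assert (0 < (/ 3) ^ k) by (apply pow_lt; lra).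
    simpl. nra.
Qed.

Lemma ex_zseries_of_bound (w : Z -> R) C :
  (forall z, Rabs (w z) <= C * (/ 3) ^ Z.abs_nat z) -> ex_zseries w.
Proof.
  intro h. split; apply (ex_series_geom_dominated _ C); intro k; apply (zhalves_bound w C h k).
Qed.

Lemma zseries_ext (w w' : Z -> R) : (forall z, w z = w' z) -> zseries w = zseries w'.
Proof. intro e. unfold zseries, zfwd, zbwd. rewrite !(Series_ext _ _ (fun k => e _)). auto. Qed.

Lemma ex_zseries_ext (w w' : Z -> R) :
  (forall z, w z = w' z) -> ex_zseries w -> ex_zseries w'.
Proof.
  intros e [h1 h2].
  split; [apply (ex_series_ext (zfwd w)) | apply (ex_series_ext (zbwd w))]; auto;
    intro; apply e.
Qed.

Lemma zseries_pos (w : Z -> R) : ex_zseries w -> (forall z, 0 < w z) -> 0 < zseries w.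
Proof.
  intros [hf hb] hp. unfold zseries.
  pose proof (series_ge_partial _ 0 hf (fun k => Rlt_le _ _ (hp _))).
  pose proof (series_ge_partial _ 0 hb (fun k => Rlt_le _ _ (hp _))).
  pose proof (hp 0%Z). pose proof (hp (-1)%Z). unfold zfwd, zbwd in *. simpl in *. lra.
Qed.

Lemma abmn_local_m a b m0 m1 mm : 0 < a -> 0 < b ->
  (a + b) * (m0 + a) = a * m1 + b * mm -> (a + b) ^ 2 = b * (m1 - mm) ->
  m1 = m0 + (2 * a + b) /\ b * (m0 - mm) = a ^ 2.
Proof.
  intros ha hb e1 e3.
  assert (h : (a + b) * (m1 - m0 - (2 * a + b)) = 0) by nra.
  apply Rmult_integral in h. destruct h as [h | h]; [lra |].
  split; [lra | nra].
Qed.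

Lemma abmn_local_n a b n0 n1 nm : 0 < a -> 0 < b ->
  (a + b) * (n0 + b) = a * n1 + b * nm -> (a + b) ^ 2 = a * (nm - n1) ->
  nm = n0 + (a + 2 * b) /\ a * (n0 - n1) = b ^ 2.
Proof.
  intros ha hb e1 e3.
  assert (h : (a + b) * (nm - n0 - (a + 2 * b)) = 0) by nra.
  apply Rmult_integral in h. destruct h as [h | h]; [lra |].
  split; [lra | nra].
Qed.

Lemma positive_solution_iff a b m n :
  positive_ABMN_solution a b m n <->
  (forall i, 0 < a i /\ 0 < b i) /\
  (forall i, m (i + 1)%Z = m i + (2 * a i + b i)) /\
  (forall i, n (i - 1)%Z = n i + (a i + 2 * b i)) /\
  (forall i, step (a (i - 1)%Z) (b (i - 1)%Z) (a i) (b i)).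
Proof.
  split.
  - intros [hs hp].
    assert (LM : forall i, m (i + 1)%Z = m i + (2 * a i + b i) /\
                           b i * (m i - m (i - 1)%Z) = a i ^ 2).
    { intro i. destruct (hs i) as [_ [_ [e1 [_ [e3 _]]]]]. destruct (hp i).
      apply abmn_local_m; auto. }
    assert (LN : forall i, n (i - 1)%Z = n i + (a i + 2 * b i) /\
                           a i * (n i - n (i + 1)%Z) = b i ^ 2).
    { intro i. destruct (hs i) as [_ [_ [_ [e2 [_ e4]]]]]. destruct (hp i).
      apply abmn_local_n; auto. }
    split; [auto |]. split; [intro i; apply LM |]. split; [intro i; apply LN |].
    intro i. destruct (LM i) as [_ hm], (LM (i - 1)%Z) as [hm' _].
    destruct (LN i) as [hn _], (LN (i - 1)%Z) as [_ hn'].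
    replace (i - 1 + 1)%Z with i in hm', hn' by lia.
    split; [rewrite <- hm, hm' | rewrite <- hn', hn]; ring.
  - intros [hp [hm [hn hst]]]. split; [| auto]. intro i.
    destruct (hp i) as [ha hb].
    pose proof (hm i) as m1. pose proof (hm (i - 1)%Z) as m0.
    pose proof (hn i) as n0. pose proof (hn (i + 1)%Z) as n1.
    replace (i - 1 + 1)%Z with i in m0 by lia. replace (i + 1 - 1)%Z with i in n1 by lia.
    destruct (hst i) as [s1 _]. destruct (hst (i + 1)%Z) as [_ s2].
    replace (i + 1 - 1)%Z with i in s2 by lia.
    assert (em : m (i - 1)%Z = m i - (2 * a (i - 1)%Z + b (i - 1)%Z)) by lra.
    assert (en : n (i + 1)%Z = n i - (a (i + 1)%Z + 2 * b (i + 1)%Z)) by lra.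
    rewrite m1, n0, em, en.
    repeat split; try lra; nra.
Qed.

Lemma shift_realizable a b m n mL mR nL nR i :
  positive_ABMN_solution a b m n -> has_boundary_data m n mL mR nL nR ->
  positive_ABMN_solution (fun z => a (z + i)%Z) (fun z => b (z + i)%Z)
     (fun z => m (z + i)%Z) (fun z => n (z + i)%Z) /\
  has_boundary_data (fun z => m (z + i)%Z) (fun z => n (z + i)%Z) mL mR nL nR.
Proof.
  intros [hs hp] [h1 [h2 [h3 h4]]]. split.
  - split; [| intro z; apply hp]. intro z.
    replace (z + 1 + i)%Z with (z + i + 1)%Z by lia.
    replace (z - 1 + i)%Z with (z + i - 1)%Z by lia. apply hs.
  - repeat split; first [apply lim_minus_shift | apply lim_plus_shift]; auto.
Qed.

Lemma reflect_realizable mL mR nL nR : realizable mL mR nL nR -> realizable nR nL mR mL.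
Proof.
  intros [a [b [m [n [[hs hp] [h1 [h2 [h3 h4]]]]]]]].
  exists (fun z => b (- z)%Z), (fun z => a (- z)%Z), (fun z => n (- z)%Z), (fun z => m (- z)%Z).
  split; [split |].
  - intro z. destruct (hs (- z)%Z) as [e1 [e2 [e3 [e4 [e5 e6]]]]].
    replace (- (z + 1))%Z with (- z - 1)%Z by lia. replace (- (z - 1))%Z with (- z + 1)%Z by lia.
    repeat split; auto; lra.
  - intro z; destruct (hp (- z)%Z); auto.
  - unfold has_boundary_data, lim_minus, lim_plus in *.
    repeat split; auto; eapply is_lim_seq_ext; try eassumption; intro k; cbv beta; f_equal; lia.
Qed.

(* The two-sided orbit through (t, 1): forward it is the orbit of (t, 1); backward
   it is the orbit of (1, t) with the components exchanged (cf. step_swap). *)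
Definition prof_a (t : R) (z : Z) : R :=
  if (0 <=? z)%Z then oa t 1 (Z.to_nat z) else ob 1 t (Z.to_nat (- z)).
Definition prof_b (t : R) (z : Z) : R :=
  if (0 <=? z)%Z then ob t 1 (Z.to_nat z) else oa 1 t (Z.to_nat (- z)).

Lemma prof_fwd t k : prof_a t (Z.of_nat k) = oa t 1 k /\ prof_b t (Z.of_nat k) = ob t 1 k.
Proof.
  unfold prof_a, prof_b.
  replace (0 <=? Z.of_nat k)%Z with true by (symmetry; apply Z.leb_le; lia).
  rewrite Nat2Z.id. auto.
Qed.

Lemma prof_bwd t k : prof_a t (- Z.of_nat k)%Z = ob 1 t k /\ prof_b t (- Z.of_nat k)%Z = oa 1 t k.
Proof.
  destruct k as [|k]; [unfold prof_a, prof_b; simpl; auto |].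
  unfold prof_a, prof_b.
  replace (0 <=? - Z.of_nat (S k))%Z with false by (symmetry; apply Z.leb_gt; lia).
  rewrite Z.opp_involutive, Nat2Z.id. auto.
Qed.

Lemma Z_cases z : (exists k, z = Z.of_nat (S k)) \/ (exists k, z = (- Z.of_nat k)%Z).
Proof.
  destruct (Z_le_gt_dec z 0) as [h | h].
  - right. exists (Z.to_nat (- z)). lia.
  - left. exists (Z.to_nat (z - 1)). lia.
Qed.

Lemma prof_pos t z : 0 < t -> 0 < prof_a t z /\ 0 < prof_b t z.
Proof.
  intro ht. destruct (Z_cases z) as [[k ->] | [k ->]].
  - destruct (prof_fwd t (S k)) as [-> ->]. apply orbit_pos; lra.
  - destruct (prof_bwd t k) as [-> ->].
    destruct (orbit_pos 1 t k ltac:(lra) ht). auto.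
Qed.

Lemma prof_step t z : 0 < t ->
  step (prof_a t (z - 1)%Z) (prof_b t (z - 1)%Z) (prof_a t z) (prof_b t z).
Proof.
  intro ht. destruct (Z_cases z) as [[k ->] | [k ->]].
  - replace (Z.of_nat (S k) - 1)%Z with (Z.of_nat k) by lia.
    destruct (prof_fwd t k) as [-> ->], (prof_fwd t (S k)) as [-> ->].
    apply orbit_step; lra.
  - replace (- Z.of_nat k - 1)%Z with (- Z.of_nat (S k))%Z by lia.
    destruct (prof_bwd t k) as [-> ->], (prof_bwd t (S k)) as [-> ->].
    apply step_swap, orbit_step; lra.
Qed.

Lemma prof_bound t z : 1 / 5 <= t <= 5 ->
  prof_a t z + prof_b t z <= 230 * (/ 3) ^ Z.abs_nat z.
Proof.
  intro ht. destruct (Z_le_gt_dec 0 z) as [h | h].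
  - destruct (Z_of_nat_complete _ h) as [k ->]. rewrite Zabs2Nat.id.
    destruct (prof_fwd t k) as [-> ->].
    destruct (orbit_pos t 1 k ltac:(lra) ltac:(lra)).
    pose proof (orbit_decay t 1 ltac:(lra) ltac:(lra) ltac:(lra) k).
    assert (0 < (/ 3) ^ k) by (apply pow_lt; lra). nra.
  - destruct (Z_of_nat_complete (- z) ltac:(lia)) as [k hk].
    replace z with (- Z.of_nat k)%Z by lia.
    replace (Z.abs_nat (- Z.of_nat k)) with k by lia.
    destruct (prof_bwd t k) as [-> ->].
    destruct (orbit_pos 1 t k ltac:(lra) ltac:(lra)).
    pose proof (orbit_decay 1 t ltac:(lra) ltac:(lra) ltac:(lra) k).
    assert (0 < (/ 3) ^ k) by (apply pow_lt; lra). nra.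
Qed.

(* Increments of m and n along the profile, and the resulting margin function:
   every positive solution has Mina margin margin_fn t for t = a_0 / b_0. *)
Definition m_incr (t : R) (z : Z) : R := 2 * prof_a t z + prof_b t z.
Definition n_incr (t : R) (z : Z) : R := prof_a t z + 2 * prof_b t z.
Definition margin_fn (t : R) : R := zseries (n_incr t) / zseries (m_incr t).

Lemma incr_bound t z : 1 / 5 <= t <= 5 ->
  Rabs (m_incr t z) <= 460 * (/ 3) ^ Z.abs_nat z /\
  Rabs (n_incr t z) <= 460 * (/ 3) ^ Z.abs_nat z.
Proof.
  intro ht. pose proof (prof_bound t z ht). destruct (prof_pos t z ltac:(lra)).
  unfold m_incr, n_incr. rewrite !Rabs_pos_eq by lra. lra.
Qed.

Lemma incr_series t : 1 / 5 <= t <= 5 ->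
  ex_zseries (m_incr t) /\ ex_zseries (n_incr t) /\
  0 < zseries (m_incr t) /\ 0 < zseries (n_incr t).
Proof.
  intro ht.
  assert (em : ex_zseries (m_incr t))
    by (apply (ex_zseries_of_bound _ 460); intro z; apply (incr_bound t z ht)).
  assert (en : ex_zseries (n_incr t))
    by (apply (ex_zseries_of_bound _ 460); intro z; apply (incr_bound t z ht)).
  split; [exact em |]. split; [exact en |].
  split; apply zseries_pos; auto; intro z;
    destruct (prof_pos t z ltac:(lra)); unfold m_incr, n_incr; lra.
Qed.

Lemma scaled_profile (a b : Z -> R) :
  (forall i, 0 < a i /\ 0 < b i) ->
  (forall i, step (a (i - 1)%Z) (b (i - 1)%Z) (a i) (b i)) ->
  let t := a 0%Z / b 0%Z in
  forall z, a z = b 0%Z * prof_a t z /\ b z = b 0%Z * prof_b t z.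
Proof.
  intros hp hst t z. destruct (hp 0%Z) as [ha0 hb0].
  assert (ht : 0 < t) by (apply Rdiv_lt_0_compat; auto).
  destruct (Z_cases z) as [[k ->] | [k ->]].
  - destruct (prof_fwd t (S k)) as [-> ->].
    apply (orbit_unique (fun k => a (Z.of_nat k)) (fun k => b (Z.of_nat k))); auto; try lra.
    + simpl. unfold t. field. lra.
    + simpl. ring.
    + intro j. pose proof (hst (Z.of_nat (S j))) as h.
      replace (Z.of_nat (S j) - 1)%Z with (Z.of_nat j) in h by lia. exact h.
  - destruct (prof_bwd t k) as [-> ->].
    apply and_comm.
    apply (orbit_unique (fun k => b (- Z.of_nat k)%Z) (fun k => a (- Z.of_nat k)%Z)); auto; try lra.
    + intro j. destruct (hp (- Z.of_nat j)%Z). auto.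
    + simpl. ring.
    + simpl. unfold t. field. lra.
    + intro j. apply step_swap. pose proof (hst (- Z.of_nat j)%Z) as h.
      replace (- Z.of_nat j - 1)%Z with (- Z.of_nat (S j))%Z in h by lia. exact h.
Qed.

Lemma gaps_of_solution a b m n mL mR nL nR :
  positive_ABMN_solution a b m n -> has_boundary_data m n mL mR nL nR ->
  let t := a 0%Z / b 0%Z in
  mR - mL = b 0%Z * zseries (m_incr t) /\ nL - nR = b 0%Z * zseries (n_incr t).
Proof.
  intros hs [h1 [h2 [h3 h4]]] t.
  apply positive_solution_iff in hs. destruct hs as [hp [hm [hn hst]]].
  pose proof (scaled_profile a b hp hst) as hprof. cbv zeta in hprof. fold t in hprof.
  rewrite <- !zseries_scale. split.
  - destruct (zseries_of_increments m (fun j => 2 * a j + b j) mL mR hm h2 h1) as [_ e].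
    rewrite <- e. apply zseries_ext. intro z. destruct (hprof z) as [-> ->].
    unfold m_incr. ring.
  - set (u := fun j => - n (j - 1)%Z).
    assert (hu : forall j, u (j + 1)%Z = u j + (a j + 2 * b j)).
    { intro j. unfold u. replace (j + 1 - 1)%Z with j by lia. rewrite (hn j). ring. }
    assert (hR : lim_plus u (- nR)).
    { pose proof (lim_plus_shift n nR (-1)%Z h4) as H. unfold lim_plus in *.
      apply (proj1 (is_lim_seq_opp _ _)) in H. exact H. }
    assert (hL : lim_minus u (- nL)).
    { pose proof (lim_minus_shift n nL (-1)%Z h3) as H. unfold lim_minus in *.
      apply (proj1 (is_lim_seq_opp _ _)) in H. exact H. }
    destruct (zseries_of_increments u _ (- nL) (- nR) hu hR hL) as [_ e].
    replace (nL - nR) with (- nR - - nL) by ring. rewrite <- e.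
    apply zseries_ext. intro z. destruct (hprof z) as [-> ->].
    unfold n_incr. ring.
Qed.

Lemma realizable_of_pairs (a b : Z -> R) mR nR :
  (forall i, 0 < a i /\ 0 < b i) ->
  (forall i, step (a (i - 1)%Z) (b (i - 1)%Z) (a i) (b i)) ->
  ex_zseries (fun z => 2 * a z + b z) -> ex_zseries (fun z => a z + 2 * b z) ->
  realizable (mR - zseries (fun z => 2 * a z + b z)) mR
             (nR + zseries (fun z => a z + 2 * b z)) nR.
Proof.
  intros hp hst em en.
  destruct (increments_of_zseries _ em mR) as [m [hm [hmR hmL]]].
  destruct (increments_of_zseries _ en (- nR)) as [u [hu [huR huL]]].
  exists a, b, m, (fun j => - u (j + 1)%Z). split.
  - apply positive_solution_iff. split; [exact hp |]. split; [exact hm |].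
    split; [| exact hst]. intro i. replace (i - 1 + 1)%Z with i by lia. rewrite (hu i). ring.
  - repeat split; auto.
    + pose proof (lim_minus_shift u _ 1%Z huL) as H. unfold lim_minus in *.
      apply (proj1 (is_lim_seq_opp _ _)) in H.
      replace (nR + _) with (- (- nR - zseries (fun z => a z + 2 * b z))) by ring. exact H.
    + pose proof (lim_plus_shift u _ 1%Z huR) as H. unfold lim_plus in *.
      apply (proj1 (is_lim_seq_opp _ _)) in H.
      rewrite <- (Ropp_involutive nR). exact H.
Qed.

Lemma realizable_of_margin t mL mR nL nR : 1 / 5 <= t <= 5 -> mL < mR -> nR < nL ->
  mina_margin mL mR nL nR = margin_fn t -> realizable mL mR nL nR.
Proof.
  intros ht hm hn hG.
  destruct (incr_series t ht) as [em [en [hmp hnp]]].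
  set (s := (mR - mL) / zseries (m_incr t)).
  assert (hs : 0 < s) by (apply Rdiv_lt_0_compat; lra).
  assert (hsm : s * zseries (m_incr t) = mR - mL) by (unfold s; field; lra).
  assert (hsn : s * zseries (n_incr t) = nL - nR).
  { unfold mina_margin, margin_fn in hG. unfold s.
    replace ((mR - mL) / zseries (m_incr t) * zseries (n_incr t))
      with ((mR - mL) * (zseries (n_incr t) / zseries (m_incr t))) by (field; lra).
    rewrite <- hG. field. lra. }
  pose proof (realizable_of_pairs (fun z => s * prof_a t z) (fun z => s * prof_b t z) mR nR)
    as H; cbv beta in H.
  rewrite (zseries_ext (fun z => 2 * (s * prof_a t z) + s * prof_b t z)
    (fun z => s * m_incr t z)) in H by (intro; unfold m_incr; ring).
  rewrite (zseries_ext (fun z => s * prof_a t z + 2 * (s * prof_b t z))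
    (fun z => s * n_incr t z)) in H by (intro; unfold n_incr; ring).
  rewrite !zseries_scale, hsm, hsn in H.
  replace mL with (mR - (mR - mL)) by ring. replace nL with (nR + (nL - nR)) by ring.
  apply H.
  - intro i. destruct (prof_pos t i ltac:(lra)). split; apply Rmult_lt_0_compat; auto.
  - intro i. apply step_scale, prof_step. lra.
  - apply (ex_zseries_ext (fun z => s * m_incr t z)); [intro; unfold m_incr; ring |].
    apply ex_zseries_scale; auto.
  - apply (ex_zseries_ext (fun z => s * n_incr t z)); [intro; unfold n_incr; ring |].
    apply ex_zseries_scale; auto.
Qed.

(* rho = (3 + sqrt 33) / 2, the successor ratio of the balanced pair (1, 1). *)
Definition rho : R := next_ratio 1 1.

Lemma rho_bounds : 3 <= rho <= 9 / 2.
Proof.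
  unfold rho, next_ratio, next_coef.
  replace (1 * (2 * 1 + 1) / (1 * 1)) with 3 by field.
  pose proof (sqrt_pos (3 * 3 + 8 * 3)). pose proof (sqrt_sqrt (3 * 3 + 8 * 3) ltac:(lra)).
  split; nra.
Qed.

Lemma ratio_evolution p q u v : 0 < p -> 0 < q -> 0 < u -> 0 < v -> step p q u v ->
  let r := p / q in let x := u / v in
  (1 <= r -> 3 * r <= x) /\ (r < 1 -> 2 * r * r <= x * x) /\ (r < 1 -> x < rho).
Proof.
  intros hp hq hu hv hs r x.
  assert (ex : x = next_ratio p q) by (apply step_ratio; auto).
  destruct (next_ratio_spec p q hp hq) as [hx [hxx hcx]].
  assert (hr : 0 < r) by (apply Rdiv_lt_0_compat; auto).
  assert (hc : next_coef p q = r * (2 * r + 1)) by (unfold next_coef, r; field; lra).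
  rewrite <- ex in hxx, hcx, hx. rewrite hc in hxx, hcx.
  split; [| split]; intro h; [nra | nra |].
  rewrite ex. unfold rho, next_ratio. rewrite hc.
  replace (next_coef 1 1) with 3 by (unfold next_coef; field).
  assert (r * (2 * r + 1) < 3) by nra.
  assert (sqrt (r * (2 * r + 1) * (r * (2 * r + 1)) + 8 * (r * (2 * r + 1)))
          < sqrt (3 * 3 + 8 * 3)) by (apply sqrt_lt_1_alt; split; nra).
  lra.
Qed.

Lemma geometric_unbounded c x M : 1 < c -> 0 < x -> exists k, M < c ^ k * x.
Proof.
  intros hc hx. destruct (Pow_x_infinity c ltac:(rewrite Rabs_pos_eq; lra) (M / x + 1))
    as [N hN].
  exists N. specialize (hN N (le_n N)). rewrite Rabs_pos_eq in hN by (apply pow_le; lra).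
  apply (Rmult_lt_reg_r (/ x)); [apply Rinv_0_lt_compat; auto |].
  replace (c ^ N * x * / x) with (c ^ N) by (field; lra). unfold Rdiv in hN. lra.
Qed.

Lemma discrete_crossing (P : Z -> Prop) k : forall j0,
  ~ P j0 -> P (j0 + Z.of_nat k)%Z -> exists i, ~ P (i - 1)%Z /\ P i.
Proof.
  induction k as [|k IH]; intros j0 h0 h1.
  - replace (j0 + Z.of_nat 0)%Z with j0 in h1 by lia. contradiction.
  - destruct (classic (P (j0 + 1)%Z)) as [h | h].
    + exists (j0 + 1)%Z. replace (j0 + 1 - 1)%Z with j0 by lia. auto.
    + apply (IH (j0 + 1)%Z h). replace (j0 + 1 + Z.of_nat k)%Z with (j0 + Z.of_nat (S k))%Z by lia.
      auto.
Qed.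

Section Crossing.
Variables a b : Z -> R.
Hypothesis hp : forall i, 0 < a i /\ 0 < b i.
Hypothesis hst : forall i, step (a (i - 1)%Z) (b (i - 1)%Z) (a i) (b i).

Local Notation r i := (a i / b i).

Lemma ratio_pos i : 0 < r i.
Proof. destruct (hp i); apply Rdiv_lt_0_compat; auto. Qed.

Lemma ratio_step i : (1 <= r (i - 1)%Z -> 3 * r (i - 1)%Z <= r i) /\
  (r (i - 1)%Z < 1 -> 2 * r (i - 1)%Z * r (i - 1)%Z <= r i * r i) /\
  (r (i - 1)%Z < 1 -> r i < rho).
Proof.
  destruct (hp i), (hp (i - 1)%Z).
  apply (ratio_evolution (a (i - 1)%Z) (b (i - 1)%Z) (a i) (b i)); auto.
Qed.

(* Going backwards, a ratio >= 1 would shrink by a factor 3 forever. *)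
Lemma ratio_somewhere_small : exists j, r j < 1.
Proof.
  apply NNPP. intro hn.
  assert (hall : forall j, 1 <= r j) by (intro j; apply Rnot_lt_le; intro; eauto).
  assert (hk : forall k, 3 ^ k * r (- Z.of_nat k)%Z <= r 0%Z).
  { induction k as [|k IH]; [simpl; lra |].
    destruct (ratio_step (- Z.of_nat k)%Z) as [f _].
    replace (- Z.of_nat k - 1)%Z with (- Z.of_nat (S k))%Z in f by lia.
    specialize (f (hall _)). assert (0 < 3 ^ k) by (apply pow_lt; lra).
    simpl pow. nra. }
  destruct (geometric_unbounded 3 1 (r 0%Z) ltac:(lra) ltac:(lra)) as [N hN].
  specialize (hk N). pose proof (hall (- Z.of_nat N)%Z).
  assert (0 < 3 ^ N) by (apply pow_lt; lra). nra.
Qed.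

(* Going forwards, a ratio < 1 would have its square doubling forever. *)
Lemma ratio_eventually_large j0 : r j0 < 1 -> exists k, 1 <= r (j0 + Z.of_nat k)%Z.
Proof.
  intro h0. apply NNPP. intro hn.
  assert (hall : forall k, r (j0 + Z.of_nat k)%Z < 1)
    by (intro k; apply Rnot_le_lt; intro; eauto).
  assert (hk : forall k, 2 ^ k * (r j0 * r j0) <= r (j0 + Z.of_nat k)%Z * r (j0 + Z.of_nat k)%Z).
  { induction k as [|k IH]; [simpl; replace (j0 + 0)%Z with j0 by lia; lra |].
    destruct (ratio_step (j0 + Z.of_nat (S k))%Z) as [_ [f _]].
    replace (j0 + Z.of_nat (S k) - 1)%Z with (j0 + Z.of_nat k)%Z in f by lia.
    specialize (f (hall _)). simpl pow. nra. }
  pose proof (ratio_pos j0).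
  destruct (geometric_unbounded 2 (r j0 * r j0) 1 ltac:(lra) ltac:(nra)) as [N hN].
  specialize (hk N). pose proof (hall N). pose proof (ratio_pos (j0 + Z.of_nat N)%Z).
  nra.
Qed.

(* Some ratio a_i / b_i lies in [1, rho]: at the first index where the ratio
   reaches 1 coming from below. *)
Lemma ratio_crossing : exists i, 1 <= r i <= rho.
Proof.
  destruct ratio_somewhere_small as [j0 h0].
  destruct (ratio_eventually_large j0 h0) as [k hk].
  destruct (discrete_crossing (fun i => 1 <= r i) k j0 ltac:(lra) hk) as [i [h1 h2]].
  exists i. split; [auto |].
  apply Rlt_le, (proj2 (proj2 (ratio_step i))). lra.
Qed.

End Crossing.

Lemma margin_fn_pos t : 1 / 5 <= t <= 5 -> 0 < margin_fn t.
Proof.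
  intro ht. destruct (incr_series t ht) as [_ [_ [hm hn]]].
  apply Rdiv_lt_0_compat; auto.
Qed.

Definition margin_range (x : R) : Prop := exists t, 1 <= t <= rho /\ x = margin_fn t.

Lemma realizable_iff mL mR nL nR : realizable mL mR nL nR <->
  mL < mR /\ nR < nL /\ margin_range (mina_margin mL mR nL nR).
Proof.
  pose proof rho_bounds. split.
  - intros [a [b [m [n [hs hbd]]]]].
    pose proof hs as hs'. apply positive_solution_iff in hs'.
    destruct hs' as [hp [_ [_ hst]]].
    destruct (ratio_crossing a b hp hst) as [i hi].
    destruct (shift_realizable a b m n mL mR nL nR i hs hbd) as [hs2 hbd2].
    destruct (gaps_of_solution _ _ _ _ _ _ _ _ hs2 hbd2) as [e1 e2].
    cbv beta zeta in e1, e2. simpl (0 + i)%Z in e1, e2.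
    destruct (hp i) as [ha hb].
    destruct (incr_series (a i / b i) ltac:(lra)) as [_ [_ [hm hn]]].
    split; [nra |]. split; [nra |].
    exists (a i / b i). split; auto.
    unfold mina_margin, margin_fn. rewrite e1, e2. field. split; lra.
  - intros [hm [hn [t [ht he]]]]. apply (realizable_of_margin t); auto. lra.
Qed.

Lemma margin_range_realizable x : margin_range x -> realizable 0 1 x 0.
Proof.
  intros [t [ht ->]]. pose proof rho_bounds. pose proof (margin_fn_pos t ltac:(lra)).
  apply realizable_iff. repeat split; try lra.
  exists t. split; auto. unfold mina_margin. field.
Qed.

Lemma margins_iff_range x : mina_margins x <-> margin_range x.
Proof.
  split.
  - intros [mL [mR [nL [nR [hr ->]]]]]. apply realizable_iff in hr.
    destruct hr as [_ [_ [t [ht he]]]]. exists t; auto.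
  - intro h. exists 0, 1, x, 0. split; [apply margin_range_realizable; auto |].
    unfold mina_margin. field.
Qed.

(* By the reflection symmetry the margin range is closed under inversion. *)
Lemma margin_range_inv x : margin_range x -> margin_range (/ x).
Proof.
  intro h. pose proof (margin_range_realizable x h) as hr.
  apply reflect_realizable, realizable_iff in hr.
  destruct hr as [hx [_ [t [ht he]]]]. exists t. split; auto.
  rewrite <- he. unfold mina_margin. field. lra.
Qed.

Lemma next_differentiable (P Q : R -> R) y :
  ex_derive P y -> ex_derive Q y -> 0 < P y -> 0 < Q y ->
  ex_derive (fun t => fst (next (P t, Q t))) y /\ ex_derive (fun t => snd (next (P t, Q t))) y.
Proof.
  intros dP dQ hP hQ.
  assert (hc : 0 < P y * (2 * P y + Q y) * / (Q y * Q y))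
    by (apply Rmult_lt_0_compat; [nra | apply Rinv_0_lt_compat; nra]).
  pose proof (sqrt_pos (P y * (2 * P y + Q y) * / (Q y * Q y) *
      (P y * (2 * P y + Q y) * / (Q y * Q y)) + 8 * (P y * (2 * P y + Q y) * / (Q y * Q y)))).
  simpl. unfold next_ratio, next_coef.
  split; auto_derive; repeat split; auto; try (apply Rgt_not_eq; nra); nra.
Qed.

Lemma orbit_differentiable (P Q : R -> R) y :
  ex_derive P y -> ex_derive Q y -> 0 < P y -> 0 < Q y -> forall k,
  ex_derive (fun t => oa (P t) (Q t) k) y /\ ex_derive (fun t => ob (P t) (Q t) k) y.
Proof.
  intros dP dQ hP hQ k. induction k as [|k [IH1 IH2]]; [split; auto |].
  destruct (orbit_pos (P y) (Q y) k hP hQ).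
  destruct (next_differentiable _ _ y IH1 IH2) as [d1 d2]; auto.
  split; [eapply ex_derive_ext; [| exact d1] | eapply ex_derive_ext; [| exact d2]];
    intro t; cbv beta; [rewrite oa_S | rewrite ob_S]; reflexivity.
Qed.

Lemma continuous_of_differentiable f y : ex_derive f y -> continuity_pt f y.
Proof. intro h. apply continuity_pt_filterlim. apply (ex_derive_continuous f y h). Qed.

Lemma prof_continuous z y : 0 < y ->
  continuity_pt (fun t => prof_a t z) y /\ continuity_pt (fun t => prof_b t z) y.
Proof.
  intro hy.
  assert (d1 : ex_derive (fun t : R => t) y) by (auto_derive; auto).
  assert (d2 : ex_derive (fun _ : R => 1) y) by (auto_derive; auto).
  destruct (orbit_differentiable (fun t => t) (fun _ => 1) y d1 d2 hy ltac:(lra)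
    (Z.to_nat z)) as [e1 e2].
  destruct (orbit_differentiable (fun _ => 1) (fun t => t) y d2 d1 ltac:(lra) hy
    (Z.to_nat (- z))) as [e3 e4].
  unfold prof_a, prof_b. destruct (0 <=? z)%Z;
    split; apply continuous_of_differentiable; assumption.
Qed.

(* A series of continuous functions dominated by C 3^(-k) near t0 converges
   uniformly there, so its sum is continuous at t0. *)
Lemma series_continuous (g : nat -> R -> R) C (d : posreal) t0 :
  (forall k y, Boule t0 d y -> Rabs (g k y) <= C * (/ 3) ^ k) ->
  (forall k y, Boule t0 d y -> continuity_pt (g k) y) ->
  continuity_pt (fun y => Series (fun k => g k y)) t0.
Proof.
  intros hb hc.
  assert (ht0 : Boule t0 d t0) by (unfold Boule; rewrite Rminus_diag, Rabs_R0; apply cond_pos).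
  assert (hC : 0 <= C) by (pose proof (hb 0%nat t0 ht0); pose proof (Rabs_pos (g 0%nat t0));
                           simpl in *; lra).
  apply (CVU_continuity (fun n y => sum_f_R0 (fun k => g k y) n) _ t0 d); auto.
  - intros eps heps.
    destruct (pow_lt_1_zero (/ 3) ltac:(rewrite Rabs_pos_eq; lra) (eps / (C + 1)))
      as [N hN]; [apply Rdiv_lt_0_compat; lra |].
    exists N. intros n y hn hy.
    assert (tail : Rabs (Series (fun k => g k y) - sum_f_R0 (fun k => g k y) n)
                   <= C * (/ 3) ^ S n * (3 / 2)).
    { apply series_tail_bound.
      - apply (ex_series_geom_dominated _ C). intro k. apply hb; auto.
      - intro k. rewrite Rmult_assoc, <- pow_add. apply hb; auto. }
    specialize (hN n hn). rewrite Rabs_pos_eq in hN by (apply pow_le; lra).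
    assert (h3 : (/ 3) ^ n * (C + 1) < eps).
    { apply (Rmult_lt_reg_r (/ (C + 1))); [apply Rinv_0_lt_compat; lra |].
      replace ((/ 3) ^ n * (C + 1) * / (C + 1)) with ((/ 3) ^ n) by (field; lra).
      exact hN. }
    assert (0 < (/ 3) ^ n) by (apply pow_lt; lra).
    simpl pow in tail. nra.
  - intros n y hy. induction n as [|n IH]; [apply hc; auto |].
    apply (continuity_pt_plus _ _ y IH (hc (S n) y hy)).
Qed.

Lemma zseries_continuous (w : R -> Z -> R) C (d : posreal) t0 :
  (forall y z, Boule t0 d y -> Rabs (w y z) <= C * (/ 3) ^ Z.abs_nat z) ->
  (forall y z, Boule t0 d y -> continuity_pt (fun s => w s z) y) ->
  continuity_pt (fun y => zseries (w y)) t0.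
Proof.
  intros hb hc. unfold zseries.
  assert (hh : forall y k, Boule t0 d y ->
    Rabs (zfwd (w y) k) <= C * (/ 3) ^ k /\ Rabs (zbwd (w y) k) <= C * (/ 3) ^ k)
    by (intros y k hy; apply (zhalves_bound (w y) C (fun z => hb y z hy))).
  apply (continuity_pt_plus (fun y => Series (zfwd (w y))) (fun y => Series (zbwd (w y))));
    apply (series_continuous _ C d t0); intros k y hy;
    try apply (hh y k hy); apply (hc y _ hy).
Qed.

(* margin_fn is continuous on [1, 9/2] (which contains [1, rho]). *)
Lemma margin_fn_continuous t0 : 1 <= t0 <= 9 / 2 -> continuity_pt margin_fn t0.
Proof.
  intro ht.
  set (d := mkposreal (1 / 2) ltac:(lra)).
  assert (hball : forall y, Boule t0 d y -> 1 / 5 <= y <= 5).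
  { intros y hy. unfold Boule in hy. simpl in hy. apply Rabs_def2 in hy. lra. }
  assert (cm : continuity_pt (fun y => zseries (m_incr y)) t0).
  { apply (zseries_continuous m_incr 460 d); intros y z hy.
    - apply (incr_bound y z (hball y hy)).
    - destruct (prof_continuous z y ltac:(specialize (hball y hy); lra)) as [ca cb].
      apply continuity_pt_plus; [apply continuity_pt_scal |]; auto. }
  assert (cn : continuity_pt (fun y => zseries (n_incr y)) t0).
  { apply (zseries_continuous n_incr 460 d); intros y z hy.
    - apply (incr_bound y z (hball y hy)).
    - destruct (prof_continuous z y ltac:(specialize (hball y hy); lra)) as [ca cb].
      apply continuity_pt_plus; [| apply continuity_pt_scal]; auto. }
  destruct (incr_series t0 ltac:(lra)) as [_ [_ [hm _]]].
  exact (continuity_pt_div _ _ t0 cn cm ltac:(lra)).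
Qed.

Lemma intermediate_value (f : R -> R) a b t1 t2 x :
  (forall c, a <= c <= b -> continuity_pt f c) ->
  a <= t1 <= b -> a <= t2 <= b -> f t1 <= x <= f t2 ->
  exists t, a <= t <= b /\ f t = x.
Proof.
  intros hc h1 h2 [hx1 hx2].
  destruct (Req_dec (f t1) x) as [e | n1]; [exists t1; auto |].
  destruct (Req_dec (f t2) x) as [e | n2]; [exists t2; auto |].
  destruct (Rtotal_order t1 t2) as [lt | [eq | gt]].
  - destruct (Ranalysis5.IVT_interv (fun t => f t - x) t1 t2) as [z [hz ez]]; try lra.
    + intros c hcc. apply continuity_pt_minus; [apply hc; lra | apply continuity_pt_const].
      intros ? ?; auto.
    + exists z. split; [lra | lra].
  - subst. lra.
  - destruct (Ranalysis5.IVT_interv (fun t => x - f t) t2 t1) as [z [hz ez]]; try lra.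
    + intros c hcc. apply continuity_pt_minus; [apply continuity_pt_const | apply hc; lra].
      intros ? ?; auto.
    + exists z. split; [lra | lra].
Qed.

Lemma continuous_image_interval (f : R -> R) a b : a <= b ->
  (forall c, a <= c <= b -> continuity_pt f c) ->
  exists lo hi, forall x, (exists t, a <= t <= b /\ x = f t) <-> lo <= x <= hi.
Proof.
  intros hab hc.
  destruct (continuity_ab_min f a b hab hc) as [tmin [hmin htmin]].
  destruct (continuity_ab_maj f a b hab hc) as [tmax [hmax htmax]].
  exists (f tmin), (f tmax). intro x. split.
  - intros [t [ht ->]]. auto.
  - intro hx. destruct (intermediate_value f a b tmin tmax x hc htmin htmax hx) as [t [ht e]].
    exists t. auto.
Qed.

Lemma inversion_closed_interval (S : R -> Prop) lo hi :
  (forall x, S x <-> lo <= x <= hi) -> 0 < lo -> lo <= hi ->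
  (forall x, S x -> S (/ x)) -> lo <= 1 /\ hi = / lo.
Proof.
  intros hS hlo hle hinv.
  assert (i1 : lo <= / hi <= hi) by (apply hS, hinv, hS; lra).
  assert (i2 : lo <= / lo <= hi) by (apply hS, hinv, hS; lra).
  assert (hhi : / hi * hi = 1) by (field; lra).
  assert (hl : / lo * lo = 1) by (field; lra).
  assert (e : hi = / lo) by nra.
  split; [| auto]. nra.
Qed.

Lemma root_bracket c x y : 0 < c -> 0 < x -> x * x = c * (x + 2) -> 0 < y ->
  (y * y <= c * (y + 2) -> y <= x) /\ (c * (y + 2) <= y * y -> x <= y).
Proof.
  intros hc hx hxx hy. assert (c < x) by nra.
  assert (e : y * y - c * (y + 2) = (y - x) * (y + x - c)) by nra.
  split; intro h; nra.
Qed.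

(* Interval enclosure of the successor: bounds on (p, q) together with rational
   certificates bracketing the successor ratio give bounds on next (p, q). *)
Lemma next_enclosure p q pl ph ql qh xl xh ul uh vl vh :
  0 < pl -> 0 < ql -> 0 < xl <= xh -> pl <= p <= ph -> ql <= q <= qh ->
  xl * xl * (qh * qh) <= pl * (2 * pl + ql) * (xl + 2) ->
  ph * (2 * ph + qh) * (xh + 2) <= xh * xh * (ql * ql) ->
  ul * xh <= 2 * pl + ql -> 2 * ph + qh <= uh * xl ->
  vl * (xh * xh) <= 2 * pl + ql -> 2 * ph + qh <= vh * (xl * xl) ->
  (ul <= fst (next (p, q)) <= uh) /\ (vl <= snd (next (p, q)) <= vh).
Proof.
  intros hpl hql hxl hp hq c1 c2 c3 c4 c5 c6.
  assert (p0 : 0 < p) by lra. assert (q0 : 0 < q) by lra.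
  destruct (next_ratio_spec p q p0 q0) as [hx [hxx _]].
  simpl. set (x := next_ratio p q) in *.
  pose proof (next_coef_pos p q p0 q0) as hc.
  assert (ec : next_coef p q * (q * q) = p * (2 * p + q)) by (unfold next_coef; field; lra).
  assert (hqq : 0 < q * q) by nra.
  assert (hxlo : xl <= x).
  { apply (proj1 (root_bracket (next_coef p q) x xl hc hx hxx ltac:(lra))).
    apply (Rmult_le_reg_r (q * q)); auto.
    replace (next_coef p q * (xl + 2) * (q * q)) with (p * (2 * p + q) * (xl + 2))
      by (rewrite <- ec; ring).
    assert (xl * xl * (q * q) <= xl * xl * (qh * qh)) by (apply Rmult_le_compat_l; nra).
    assert (pl * (2 * pl + ql) * (xl + 2) <= p * (2 * p + q) * (xl + 2))
      by (apply Rmult_le_compat_r; nra).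
    nra. }
  assert (hxhi : x <= xh).
  { apply (proj2 (root_bracket (next_coef p q) x xh hc hx hxx ltac:(lra))).
    apply (Rmult_le_reg_r (q * q)); auto.
    replace (next_coef p q * (xh + 2) * (q * q)) with (p * (2 * p + q) * (xh + 2))
      by (rewrite <- ec; ring).
    assert (xh * xh * (ql * ql) <= xh * xh * (q * q)) by (apply Rmult_le_compat_l; nra).
    assert (p * (2 * p + q) * (xh + 2) <= ph * (2 * ph + qh) * (xh + 2))
      by (apply Rmult_le_compat_r; nra).
    nra. }
  assert (hs : 2 * pl + ql <= 2 * p + q <= 2 * ph + qh) by lra.
  assert (hxx2 : xl * xl <= x * x <= xh * xh) by (split; nra).
  assert (eu : (2 * p + q) / x * x = 2 * p + q) by (field; lra).
  assert (ev : (2 * p + q) / (x * x) * (x * x) = 2 * p + q) by (field; lra).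
  assert (hu : 0 < (2 * p + q) / x) by (apply Rdiv_lt_0_compat; lra).
  assert (hv : 0 < (2 * p + q) / (x * x)) by (apply Rdiv_lt_0_compat; nra).
  assert (huh : 0 < uh) by nra. assert (hvh : 0 < vh) by nra.
  split; split.
  - destruct (Rle_or_lt ul 0); [lra |].
    apply (Rmult_le_reg_r x); [lra |]. rewrite eu.
    assert (ul * x <= ul * xh) by (apply Rmult_le_compat_l; lra). lra.
  - apply (Rmult_le_reg_r x); [lra |]. rewrite eu.
    assert (uh * xl <= uh * x) by (apply Rmult_le_compat_l; lra). lra.
  - destruct (Rle_or_lt vl 0); [lra |].
    apply (Rmult_le_reg_r (x * x)); [nra |]. rewrite ev.
    assert (vl * (x * x) <= vl * (xh * xh)) by (apply Rmult_le_compat_l; lra). lra.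
  - apply (Rmult_le_reg_r (x * x)); [nra |]. rewrite ev.
    assert (vh * (xl * xl) <= vh * (x * x)) by (apply Rmult_le_compat_l; lra). lra.
Qed.

Lemma orbit_enclosure p q k pl ph ql qh xl xh ul uh vl vh :
  0 < p -> 0 < q -> 0 < pl -> 0 < ql -> 0 < xl <= xh ->
  xl * xl * (qh * qh) <= pl * (2 * pl + ql) * (xl + 2) ->
  ph * (2 * ph + qh) * (xh + 2) <= xh * xh * (ql * ql) ->
  ul * xh <= 2 * pl + ql -> 2 * ph + qh <= uh * xl ->
  vl * (xh * xh) <= 2 * pl + ql -> 2 * ph + qh <= vh * (xl * xl) ->
  (pl <= oa p q k <= ph) /\ (ql <= ob p q k <= qh) ->
  (ul <= oa p q (S k) <= uh) /\ (vl <= ob p q (S k) <= vh).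
Proof.
  intros hp hq hpl hql hxl c1 c2 c3 c4 c5 c6 [hk1 hk2].
  rewrite oa_S, ob_S. apply (next_enclosure _ _ pl ph ql qh xl xh); auto.
Qed.

(* The point at which margin_fn is evaluated to bound lambda, and rigorous
   enclosures of the first orbit terms through (ts, 1) and (1, ts), each obtained
   from the previous one by orbit_enclosure with explicit certificates. *)
Definition ts : R := 2.906.

Lemma ts_forward_1 :
  (0.31498582 <= oa ts 1 1 <= 0.31498584) /\ (0.014564895 <= ob ts 1 1 <= 0.014564898).
Proof.
  apply (orbit_enclosure _ _ 0 2.906 2.906 1 1
           21.626369 21.62637);
    unfold ts; cbn [oa ob orbit fst snd]; lra.
Qed.

Lemma ts_forward_2 :
  (6.7207678e-4 <= oa ts 1 2 <= 6.720772e-4) /\ (7.0079379e-7 <= ob ts 1 2 <= 7.0079462e-7).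
Proof.
  apply (orbit_enclosure _ _ 1 0.31498582 0.31498584 0.014564895 0.014564898
           959.02164 959.02217);
    [ (unfold ts; lra) .. | exact ts_forward_1 ].
Qed.

Lemma ts_backward_1 :
  (3.4872547 <= oa 1 ts 1 <= 3.487255) /\ (2.4787903 <= ob 1 ts 1 <= 2.4787907).
Proof.
  apply (orbit_enclosure _ _ 0 1 1 2.906 2.906
           1.4068372 1.4068373);
    unfold ts; cbn [oa ob orbit fst snd]; lra.
Qed.

Lemma ts_backward_2 :
  (1.3667512 <= oa 1 ts 2 <= 1.3667521) /\ (0.19760391 <= ob 1 ts 2 <= 0.19760411).
Proof.
  apply (orbit_enclosure _ _ 1 3.4872547 3.487255 2.4787903 2.4787907
           6.9166174 6.9166204);
    [ (unfold ts; lra) .. | exact ts_backward_1 ].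
Qed.

Lemma ts_backward_3 :
  (0.02803317 <= oa 1 ts 3 <= 0.028033287) /\ (2.6810991e-4 <= ob 1 ts 3 <= 2.6811195e-4).
Proof.
  apply (orbit_enclosure _ _ 2 1.3667512 1.3667521 0.19760391 0.19760411
           104.55814 104.5585);
    [ (unfold ts; lra) .. | exact ts_backward_2 ].
Qed.

Lemma ts_backward_4 :
  (2.5639547e-6 <= oa 1 ts 4 <= 2.5640261e-6) /\ (1.1669349e-10 <= ob 1 ts 4 <= 1.166995e-10).
Proof.
  apply (orbit_enclosure _ _ 3 0.02803317 0.028033287 2.6810991e-4 2.6811195e-4
           21971.183 21971.702);
    [ (unfold ts; lra) .. | exact ts_backward_3 ].
Qed.

Lemma incr_halves t k :
  zfwd (m_incr t) k = 2 * oa t 1 k + ob t 1 k /\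
  zbwd (m_incr t) k = 2 * ob 1 t (S k) + oa 1 t (S k) /\
  zfwd (n_incr t) k = oa t 1 k + 2 * ob t 1 k /\
  zbwd (n_incr t) k = ob 1 t (S k) + 2 * oa 1 t (S k).
Proof.
  unfold zfwd, zbwd, m_incr, n_incr.
  replace (-1 - Z.of_nat k)%Z with (- Z.of_nat (S k))%Z by lia.
  destruct (prof_fwd t k) as [-> ->], (prof_bwd t (S k)) as [-> ->]. auto.
Qed.

Section TruncatedSums.
Variable t : R.
Hypothesis ht : 1 / 5 <= t <= 5.

Lemma m_total_lower :
  (2 * oa t 1 0 + ob t 1 0) + (2 * oa t 1 1 + ob t 1 1) + (2 * oa t 1 2 + ob t 1 2) +
  (2 * ob 1 t 1 + oa 1 t 1) + (2 * ob 1 t 2 + oa 1 t 2) +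
  (2 * ob 1 t 3 + oa 1 t 3) + (2 * ob 1 t 4 + oa 1 t 4) <= zseries (m_incr t).
Proof.
  destruct (incr_series t ht) as [[ef eb] _].
  assert (hpos : forall z, 0 <= m_incr t z)
    by (intro z; destruct (prof_pos t z ltac:(lra)); unfold m_incr; lra).
  pose proof (series_ge_partial _ 2 ef (fun k => hpos _)) as L1.
  pose proof (series_ge_partial _ 3 eb (fun k => hpos _)) as L2.
  cbn [sum_f_R0] in L1, L2.
  unfold zseries. rewrite !(fun k => proj1 (incr_halves t k)) in L1.
  rewrite !(fun k => proj1 (proj2 (incr_halves t k))) in L2. lra.
Qed.

(* Upper bound for the n-gap series by a few terms plus geometric tails; this needs
   the orbits to be balanced at the truncation points. *)
Lemma n_total_upper : ob t 1 2 <= oa t 1 2 -> ob 1 t 4 <= oa 1 t 4 ->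
  zseries (n_incr t) <=
  (oa t 1 0 + 2 * ob t 1 0) + (oa t 1 1 + 2 * ob t 1 1) + (oa t 1 2 + 2 * ob t 1 2) +
  (ob 1 t 1 + 2 * oa 1 t 1) + (ob 1 t 2 + 2 * oa 1 t 2) +
  (ob 1 t 3 + 2 * oa 1 t 3) + (ob 1 t 4 + 2 * oa 1 t 4) + (ob t 1 2 + 2 * ob 1 t 4) * (3 / 2).
Proof.
  intros bal_f bal_b.
  destruct (incr_series t ht) as [_ [[ef eb] _]].
  assert (U1 : Rabs (Series (zfwd (n_incr t)) - sum_f_R0 (zfwd (n_incr t)) 2)
               <= ob t 1 2 * (3 / 2)).
  { apply series_tail_bound; auto. intro k.
    rewrite (proj1 (proj2 (proj2 (incr_halves t _)))).
    destruct (orbit_pos t 1 (S 2 + k) ltac:(lra) ltac:(lra)).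
    rewrite Rabs_pos_eq by lra.
    destruct (balanced_decay t 1 ltac:(lra) ltac:(lra) 2 bal_f k) as [_ D]. exact D. }
  assert (U2 : Rabs (Series (zbwd (n_incr t)) - sum_f_R0 (zbwd (n_incr t)) 3)
               <= 2 * ob 1 t 4 * (3 / 2)).
  { apply series_tail_bound; auto. intro k.
    rewrite (proj2 (proj2 (proj2 (incr_halves t _)))).
    replace (S (S 3 + k)) with (4 + 1 + k)%nat by lia.
    destruct (orbit_pos 1 t (4 + 1 + k) ltac:(lra) ltac:(lra)).
    rewrite Rabs_pos_eq by lra.
    destruct (balanced_decay 1 t ltac:(lra) ltac:(lra) 4 bal_b k) as [_ D]. lra. }
  apply (Rle_trans _ _ _ (Rle_abs _)) in U1, U2.
  cbn [sum_f_R0] in U1, U2.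
  rewrite !(fun k => proj1 (proj2 (proj2 (incr_halves t k)))) in U1.
  rewrite !(fun k => proj2 (proj2 (proj2 (incr_halves t k)))) in U2.
  unfold zseries. lra.
Qed.
End TruncatedSums.

Lemma margin_fn_at_ts : margin_fn ts <= 999904 / 1000000.
Proof.
  assert (ht : 1 / 5 <= ts <= 5) by (unfold ts; lra).
  pose proof ts_forward_1. pose proof ts_forward_2.
  pose proof ts_backward_1. pose proof ts_backward_2.
  pose proof ts_backward_3. pose proof ts_backward_4.
  pose proof (m_total_lower ts ht) as L.
  pose proof (n_total_upper ts ht ltac:(lra) ltac:(lra)) as U.
  destruct (incr_series ts ht) as [_ [_ [hm _]]].
  change (oa ts 1 0) with ts in L, U. change (ob ts 1 0) with 1 in L, U.
  unfold margin_fn. apply (Rmult_le_reg_r (zseries (m_incr ts))); auto.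
  unfold Rdiv. rewrite Rmult_assoc, Rinv_l, Rmult_1_r by lra.
  unfold ts in *. lra.
Qed.

(* The margin range is an interval [lambda, 1/lambda] with 0 < lambda <= 1: it is
   the continuous image of [1, rho], and it is closed under inversion. *)
Lemma margin_range_interval :
  exists lambda, 0 < lambda <= 1 /\ forall x, margin_range x <-> lambda <= x <= / lambda.
Proof.
  pose proof rho_bounds.
  destruct (continuous_image_interval margin_fn 1 rho ltac:(lra)
              (fun c hc => margin_fn_continuous c ltac:(lra))) as [lo [hi hI]].
  assert (hr1 : margin_range (margin_fn 1)) by (exists 1; split; [lra | auto]).
  assert (hle : lo <= hi) by (apply hI in hr1; lra).
  assert (hlo : 0 < lo).
  { destruct (proj2 (hI lo) ltac:(lra)) as [t [ht ->]]. apply margin_fn_pos. lra. }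
  destruct (inversion_closed_interval margin_range lo hi hI hlo hle margin_range_inv)
    as [h1 e]. subst hi.
  exists lo. auto.
Qed.

Theorem mainTheorem2 :
  exists lambda : R,
    0 < lambda <= 1 /\
    (forall x : R, mina_margins x <-> lambda <= x <= / lambda) /\
    (forall mL mR nL nR : R,
        realizable mL mR nL nR <->
        (mL < mR /\ nR < nL /\
         lambda <= mina_margin mL mR nL nR <= / lambda)) /\
    lambda <= 999904 / 1000000.
Proof.
  destruct margin_range_interval as [lambda [hl hI]].
  exists lambda. split; [exact hl |]. split; [| split].
  - intro x. rewrite margins_iff_range. apply hI.
  - intros mL mR nL nR. rewrite realizable_iff, hI. reflexivity.
  - assert (hts : margin_range (margin_fn ts))
      by (exists ts; pose proof rho_bounds; unfold ts; split; [lra | auto]).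
    apply hI in hts. pose proof margin_fn_at_ts. lra.
Qed.
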